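(* Let $(G=(V,E),\sigma)$ be a properly $n$-colored graph containing a hub-vertex $x$. If $F$ is an optimal RBMG deletion set (resp. optimal RBMG edit set) for $(G,\sigma)$, then $F$ contains no pair of the form $xv$ with $v\in V$.
   Context: All graphs are finite, simple and undirected; $G\setminus F=(V,E\setminus F)$, $G\triangle F=(V,E\triangle F)$. A vertex coloring is a surjective map $\sigma:V\to S$; properly $n$-colored means adjacent vertices get distinct colors and $|S|=n$. A hub-vertex of $G$ is a vertex adjacent to all other vertices. A phylogenetic tree $T$ on $L$ is a rooted tree with leaf set $L$ whose inner vertices other than the root have degree at least three; $u\preceq_T v$ means $v$ lies on the root-to-$u$ path; $\mathrm{lca}_T$ is last common ancestor. For surjective $\sigma:L\to S$, $y$ is a best match of $x$ if $\sigma(x)\neq\sigma(y)$ and $\mathrm{lca}_T(x,y)\preceq_T\mathrm{lca}_T(x,y')$ for all $y'$ with $\sigma(y')=\sigma(y)$; $G(T,\sigma)$ is the graph on $L$ whose edges are the reciprocal best match pairs. A properly colored $(G,\sigma)$ is an RBMG if $G(T,\sigma)=(G,\sigma)$ for some $(T,\sigma)$; an $n$-RBMG if exactly $n$ colors are used. For a properly $n$-colored $(G,\sigma)$, $F\subseteq E$ is an (RBMG) deletion set if $(G\setminus F,\sigma)$ is an $n$-RBMG, and $F\subseteq\binom{V}{2}$ is an edit set if $(G\triangle F,\sigma)$ is an $n$-RBMG; such a set is optimal if it has minimum cardinality among all deletion (resp. edit) sets. *)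

From mathcomp Require Import all_boot.
Set Implicit Arguments. Unset Strict Implicit. Unset Printing Implicit Defensive.

(* A finite simple graph on vertex type V is given by its edge set
   E : {set {set V}}, every edge being a 2-element subset of V.
   The pair xy is the set [set x; y]. *)
Definition simple_edges (V : finType) (E : {set {set V}}) : Prop :=
  forall e, e \in E -> #|e| = 2.

Definition adj (V : finType) (E : {set {set V}}) (x y : V) : Prop :=
  [set x; y] \in E.

Definition proper_coloring (V S : finType) (E : {set {set V}}) (sigma : V -> S) : Prop :=
  forall x y, adj E x y -> sigma x <> sigma y.

Definition properly_n_colored (V S : finType) (E : {set {set V}}) (sigma : V -> S)
  (n : nat) : Prop :=
  proper_coloring E sigma /\ (forall s : S, exists x, sigma x = s) /\ #|S| = n.

Definition hub_vertex (V : finType) (E : {set {set V}}) (x : V) : Prop :=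
  forall v, v <> x -> adj E x v.

Definition rooted_tree (N : finType) (root : N) (par : N -> N) : Prop :=
  par root = root /\ forall u, exists k, iter k par u = root.

Definition is_child (N : finType) (root : N) (par : N -> N) (u v : N) : bool :=
  (u != root) && (par u == v).

Definition nchildren (N : finType) (root : N) (par : N -> N) (v : N) : nat :=
  #|[set u | is_child root par u v]|.

Definition is_leaf (N : finType) (root : N) (par : N -> N) (v : N) : bool :=
  nchildren root par v == 0.

(* phylogenetic tree on leaf set V: leaves are labelled bijectively by lf;
   every inner vertex other than the root has degree >= 3, i.e. (counting
   its parent edge) at least two children. *)
Definition phylo_tree (V N : finType) (root : N) (par : N -> N) (lf : V -> N) : Prop :=
  [/\ rooted_tree root par,
      injective lf,
      (forall v, is_leaf root par v <-> exists x, lf x = v) &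
      (forall v, v <> root -> ~~ is_leaf root par v -> 2 <= nchildren root par v)].

Definition anc (N : finType) (par : N -> N) (u v : N) : Prop :=
  exists k, iter k par u = v.

Definition is_lca (N : finType) (par : N -> N) (a b w : N) : Prop :=
  [/\ anc par a w, anc par b w &
      forall w', anc par a w' -> anc par b w' -> anc par w w'].

Definition best_match (V N S : finType) (par : N -> N) (lf : V -> N) (sigma : V -> S)
  (x y : V) : Prop :=
  sigma x <> sigma y /\
  forall y', sigma y' = sigma y ->
    forall w w', is_lca par (lf x) (lf y) w -> is_lca par (lf x) (lf y') w' ->
      anc par w w'.

Definition reciprocal_best_match (V N S : finType) (par : N -> N) (lf : V -> N)
  (sigma : V -> S) (x y : V) : Prop :=
  best_match par lf sigma x y /\ best_match par lf sigma y x.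

Definition is_RBMG (V S : finType) (E : {set {set V}}) (sigma : V -> S) : Prop :=
  proper_coloring E sigma /\
  exists (N : finType) (root : N) (par : N -> N) (lf : V -> N),
    phylo_tree root par lf /\
    forall x y, adj E x y <-> reciprocal_best_match par lf sigma x y.

Definition is_nRBMG (V S : finType) (E : {set {set V}}) (sigma : V -> S) (n : nat) : Prop :=
  is_RBMG E sigma /\ #|[set sigma x | x in V]| = n.

Definition deletion_set (V S : finType) (E : {set {set V}}) (sigma : V -> S) (n : nat)
  (F : {set {set V}}) : Prop :=
  F \subset E /\ is_nRBMG (E :\: F) sigma n.

Definition edit_set (V S : finType) (E : {set {set V}}) (sigma : V -> S) (n : nat)
  (F : {set {set V}}) : Prop :=
  (forall e, e \in F -> #|e| = 2) /\ is_nRBMG ((E :\: F) :|: (F :\: E)) sigma n.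

Definition optimal_deletion_set (V S : finType) (E : {set {set V}}) (sigma : V -> S)
  (n : nat) (F : {set {set V}}) : Prop :=
  deletion_set E sigma n F /\
  forall F', deletion_set E sigma n F' -> #|F| <= #|F'|.

Definition optimal_edit_set (V S : finType) (E : {set {set V}}) (sigma : V -> S)
  (n : nat) (F : {set {set V}}) : Prop :=
  edit_set E sigma n F /\
  forall F', edit_set E sigma n F' -> #|F| <= #|F'|.

From mathcomp Require Import all_boot.
From Stdlib Require Import Setoid.
Set Implicit Arguments. Unset Strict Implicit. Unset Printing Implicit Defensive.

(* A hub vertex x is the only vertex of its color, the coloring being proper.  Let F be a
   deletion or edit set and T a tree explaining the corrected graph.  Detach the leaf x and
   hang it directly below a new root placed above the old one, then suppress the inner
   vertices left with a single child.  Last common ancestors of the other leaves compare as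
   before, while lca(x, y) is the root for every y; as x is alone in its color class, x
   becomes a reciprocal best match of every other vertex.  Hence removing from F all pairs
   containing x gives again a deletion (resp. edit) set, strictly smaller if F contained
   such a pair, so an optimal F contains none. *)

Lemma iter_fix (T : Type) (f : T -> T) (u : T) k : f u = u -> iter k f u = u.
Proof. by move=> fu; elim: k => //= k ->. Qed.

Section Ancestry.
Variables (N : finType) (par : N -> N).

(* The paper's lca(u, v) <= lca(u, z), phrased without last common ancestors; see
   [lca_orderP]. *)
Definition lca_le (u v z : N) : Prop :=
  forall w, anc par u w -> anc par z w -> anc par v w.

Lemma anc_refl u : anc par u u.
Proof. by exists 0. Qed.

Lemma anc_par u : anc par u (par u).
Proof. by exists 1. Qed.

Lemma anc_trans u v w : anc par u v -> anc par v w -> anc par u w.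
Proof. by move=> [k <-] [m <-]; exists (m + k); rewrite iterD. Qed.

Lemma ancP u w : reflect (anc par u w) (fconnect par u w).
Proof.
apply: (iffP idP) => [/iter_findex <-|[k <-]]; first by eexists.
exact: fconnect_iter.
Qed.

Lemma anc_child a u :
  anc par a u -> a != u -> exists v, [/\ par v = u, anc par a v & v != u].
Proof.
move=> [k]; elim: k a => [|k IH] a; first by move=> /= ->; rewrite eqxx.
rewrite iterSr => Hk au; have [pau|pau] := eqVneq (par a) u.
  by exists a; split=> //; exact: anc_refl.
have [v [pv av vu]] := IH _ Hk pau.
by exists v; split=> //; exact: anc_trans (anc_par a) av.
Qed.

Variable r : N.
Hypothesis tree : rooted_tree r par.

Lemma anc_root u : anc par u r.
Proof. by case: tree => _ /(_ u). Qed.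

Lemma par_neq u : u != r -> par u != u.
Proof.
move=> ur; apply/eqP => pu; case: tree => _ /(_ u) [k].
by rewrite iter_fix // => uE; rewrite uE eqxx in ur.
Qed.

Lemma lca_exists u v : exists w, is_lca par u v w.
Proof.
have exP : exists k, fconnect par v (iter k par u).
  have [k uk] := anc_root u; exists k; rewrite uk; exact/ancP/anc_root.
case: (ex_minnP exP) => k /ancP vk kmin.
exists (iter k par u); split=> //; first by exists k.
move=> _ [j <-] /ancP /kmin kj.
by exists (j - k); rewrite -iterD subnK.
Qed.

Lemma lca_orderP u v z :
  (forall w w', is_lca par u v w -> is_lca par u z w' -> anc par w w') <->
  lca_le u v z.
Proof.
split=> [le w uw zw | le w w' [_ _ wmin] [uw' zw' _]]; last exact: wmin (le _ uw' zw').
have [w0 lca0] := lca_exists u v; have [w1 lca1] := lca_exists u z.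
case: (lca0) => _ vw0 _; case: (lca1) => _ _ w1min.
exact: anc_trans vw0 (anc_trans (le _ _ lca0 lca1) (w1min _ uw zw)).
Qed.

End Ancestry.

Lemma is_leafP (N : finType) (r : N) par v :
  is_leaf r par v <-> forall u, u != r -> par u != v.
Proof.
rewrite /is_leaf /nchildren cards_eq0; split.
  move=> /eqP leaf u ur; apply/eqP => puv.
  have : u \in [set u | is_child r par u v] by rewrite inE /is_child ur puv eqxx.
  by rewrite leaf inE.
move=> leaf; apply/eqP/setP => u; rewrite !inE /is_child.
by have [//|ur] := eqVneq u r; apply/negbTE/leaf.
Qed.

Lemma anc_leaf (N : finType) (r : N) par l u :
  par r = r -> is_leaf r par l -> anc par u l -> u = l.
Proof.
move=> pr /is_leafP leaf [k]; elim: k => [//|k IH] /=.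
have [ikr|ikr] := eqVneq (iter k par u) r; first by rewrite ikr pr -ikr.
by move=> pl; move: (leaf _ ikr); rewrite pl eqxx.
Qed.

Lemma leaf_neq_root (N : finType) (r : N) par l u :
  rooted_tree r par -> is_leaf r par l -> u != l -> l != r.
Proof.
move=> tree /is_leafP leaf ul; apply/eqP => lr; subst l.
have [w [pw _ wr]] := anc_child (anc_root tree u) ul.
by move: (leaf w wr); rewrite pw eqxx.
Qed.

Lemma best_matchE (V S N : finType) (r : N) par (lf : V -> N) (sigma : V -> S) x y :
  rooted_tree r par ->
  best_match par lf sigma x y <->
  sigma x <> sigma y /\
  forall y', sigma y' = sigma y -> lca_le par (lf x) (lf y) (lf y').
Proof.
by move=> tree; split=> -[neq le]; split=> // y' /le le'; apply/(lca_orderP tree).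
Qed.

(* Comparisons of last common ancestors among leaves of A depend only on the A-clusters,
   the sets of leaves of A below a vertex ([lca_le_cluster_sub]). *)
Definition cluster_sub (V M M' : finType) (A : pred V) (par : M -> M) (lf : V -> M)
    (par' : M' -> M') (lf' : V -> M') : Prop :=
  forall w, exists w', forall a, A a -> anc par (lf a) w <-> anc par' (lf' a) w'.

Section Clusters.
Variables (V M1 M2 M3 : finType) (A : pred V).
Variables (par1 : M1 -> M1) (lf1 : V -> M1) (par2 : M2 -> M2) (lf2 : V -> M2).

Lemma cluster_sub_refl : cluster_sub A par1 lf1 par1 lf1.
Proof. by move=> w; exists w. Qed.

Lemma cluster_sub_trans (par3 : M3 -> M3) (lf3 : V -> M3) :
  cluster_sub A par1 lf1 par2 lf2 -> cluster_sub A par2 lf2 par3 lf3 ->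
  cluster_sub A par1 lf1 par3 lf3.
Proof.
move=> sub12 sub23 w1; have [w2 E12] := sub12 w1; have [w3 E23] := sub23 w2.
by exists w3 => a Aa; rewrite E12 // E23.
Qed.

Lemma cluster_sub_predT :
  cluster_sub predT par1 lf1 par2 lf2 -> cluster_sub A par1 lf1 par2 lf2.
Proof. by move=> sub w; have [w' E] := sub w; exists w' => a _; exact: E. Qed.

Lemma lca_le_cluster_sub a b d :
  cluster_sub A par2 lf2 par1 lf1 -> A a -> A b -> A d ->
  lca_le par1 (lf1 a) (lf1 b) (lf1 d) -> lca_le par2 (lf2 a) (lf2 b) (lf2 d).
Proof.
move=> sub Aa Ab Ad le w2 aw2 dw2; have [w1 E] := sub w2.
by apply/(E b Ab); apply: le; [apply/(E a Aa) | apply/(E d Ad)].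
Qed.

End Clusters.

Lemma best_match_cluster_sub (V S M1 M2 : finType) (A : pred V)
    (sigma : V -> S) (r1 : M1) (par1 : M1 -> M1) (lf1 : V -> M1)
    (r2 : M2) (par2 : M2 -> M2) (lf2 : V -> M2) a b :
  rooted_tree r1 par1 -> rooted_tree r2 par2 ->
  cluster_sub A par1 lf1 par2 lf2 -> cluster_sub A par2 lf2 par1 lf1 ->
  (forall y z, sigma y = sigma z -> A z -> A y) -> A a -> A b ->
  best_match par1 lf1 sigma a b <-> best_match par2 lf2 sigma a b.
Proof.
move=> tree1 tree2 sub12 sub21 Acolor Aa Ab.
rewrite (best_matchE _ _ _ _ tree1) (best_matchE _ _ _ _ tree2).
split=> -[neq le]; split=> // y yb; have Ay := Acolor _ _ yb Ab.
  exact: lca_le_cluster_sub sub21 Aa Ab Ay (le y yb).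
exact: lca_le_cluster_sub sub12 Aa Ab Ay (le y yb).
Qed.

Definition leaf_labelled_tree (V N : finType) (root : N) (par : N -> N) (lf : V -> N) :=
  [/\ rooted_tree root par, injective lf &
      forall v, is_leaf root par v <-> exists x, lf x = v].

(* Suppression of a non-root vertex [u] with a single child [c]: [c] is re-attached to
   [par u], and [u] is removed from the vertex type. *)
Section SuppressUnaryVertex.
Variables (V M : finType) (r : M) (par : M -> M) (lf : V -> M) (u c : M).
Hypotheses (tree : leaf_labelled_tree r par lf) (ur : u != r).
Hypothesis children_u : [set w | is_child r par w u] = [set c].

Let rtree : rooted_tree r par. Proof. by case: tree. Qed.
Let par_r : par r = r. Proof. by case: rtree. Qed.
Let par_u : par u != u := par_neq rtree ur.

Let child_u w : w != r -> par w = u -> w = c.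
Proof.
move=> wr pw; have : w \in [set w | is_child r par w u].
  by rewrite inE /is_child wr pw eqxx.
by rewrite children_u inE => /eqP.
Qed.

Let child_c : [/\ c != r, par c = u & c != u].
Proof.
have := set11 c; rewrite -children_u inE /is_child => /andP [cr /eqP pc].
by split=> //; apply: contraNneq par_u => cu; rewrite -{1}cu pc.
Qed.

Definition skip_par (w : M) : M := if par w == u then par u else par w.

Lemma skip_par_neq w : skip_par w != u.
Proof. by rewrite /skip_par; case: ifP => // /negbT. Qed.

Lemma anc_skip_par w y : anc skip_par w y -> anc par w y.
Proof.
have step z : anc par z (skip_par z).
  rewrite /skip_par; case: ifP => [/eqP pz|_]; last exact: anc_par.
  by rewrite -pz; exact: anc_trans (anc_par _ _) (anc_par _ _).
move=> [k <-]; elim: k => [|k IH]; first exact: anc_refl.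
by rewrite iterS; exact: anc_trans IH (step _).
Qed.

Lemma anc_par_skip w y : y != u -> anc par w y -> anc skip_par w y.
Proof.
move=> yu [k]; elim/ltn_ind: k w => -[|k] IH w; first by move=> <-; exact: anc_refl.
rewrite iterSr; have [pw|pw] := eqVneq (par w) u; last first.
  move=> /(IH _ (ltnSn _)) [j <-].
  by exists j.+1; rewrite iterSr /skip_par (negbTE pw).
case: k IH => [|k] IH; first by rewrite /= pw => uy; rewrite uy eqxx in yu.
rewrite iterSr pw => /(IH _ (leqnSn _)) [j <-].
by exists j.+1; rewrite iterSr /skip_par pw eqxx.
Qed.

Definition suppress_par (v : {w : M | w != u}) : {w : M | w != u} :=
  insubd v (skip_par (val v)).

Lemma val_suppress_par v : val (suppress_par v) = skip_par (val v).
Proof. by rewrite /suppress_par val_insubd skip_par_neq. Qed.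

Lemma val_iter_suppress_par v k :
  val (iter k suppress_par v) = iter k skip_par (val v).
Proof. by elim: k => //= k <-; rewrite val_suppress_par. Qed.

Lemma anc_suppress_par v w : anc suppress_par v w <-> anc par (val v) (val w).
Proof.
split=> [[k <-]|/(anc_par_skip (valP w)) [k kw]].
  by apply: anc_skip_par; exists k; rewrite val_iter_suppress_par.
by exists k; apply: val_inj; rewrite val_iter_suppress_par.
Qed.

Lemma lf_neq_u a : lf a != u.
Proof.
have /is_leafP leaf : is_leaf r par (lf a) by case: tree => _ _ ->; exists a.
by case: child_c => cr pc _; rewrite -pc eq_sym leaf.
Qed.

Lemma anc_lf_u a : anc par (lf a) u <-> anc par (lf a) c.
Proof.
case: child_c => _ pc _; split=> [au|ac]; last first.
  by rewrite -pc; exact: anc_trans ac (anc_par _ _).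
have [v [pv av vu]] := anc_child au (lf_neq_u a).
suff vr : v != r by rewrite -(child_u vr pv).
by apply: contraNneq ur => vr; rewrite -pv vr par_r.
Qed.

Lemma root_neq_u : r != u. Proof. by rewrite eq_sym. Qed.

Definition suppress_root : {w : M | w != u} := Sub r root_neq_u.
Definition suppress_lf (a : V) : {w : M | w != u} := Sub (lf a) (lf_neq_u a).

Lemma is_leaf_suppress w :
  is_leaf suppress_root suppress_par w <-> is_leaf r par (val w).
Proof.
have neq_val (v v' : {x : M | x != u}) : (v != v') = (val v != val v').
  by rewrite (inj_eq val_inj).
split=> /is_leafP leaf; apply/is_leafP => y yr.
- have [yu|yu] := eqVneq y u.
    case: child_c => cr pc cu; have := leaf (Sub c cu).
    by rewrite !neq_val val_suppress_par /skip_par pc eqxx yu; apply.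
  have := leaf (Sub y yu); rewrite !neq_val val_suppress_par /skip_par => /(_ yr).
  by case: ifP => [/eqP -> _|_ //]; rewrite eq_sym (valP w).
- rewrite neq_val val_suppress_par /skip_par; rewrite neq_val in yr.
  by case: ifP => _; apply: leaf.
Qed.

Lemma suppress_leaf_labelled_tree :
  leaf_labelled_tree suppress_root suppress_par suppress_lf.
Proof.
case: tree => _ lf_inj leafE; split.
- split; last by move=> v; apply/anc_suppress_par; exact: anc_root rtree _.
  by apply: val_inj; rewrite val_suppress_par /skip_par par_r (negbTE root_neq_u).
- by move=> a b /(congr1 val) /lf_inj.
- move=> w; rewrite is_leaf_suppress leafE.
  by split=> -[a aw]; exists a; [apply: val_inj | rewrite -aw].
Qed.

Lemma cluster_sub_suppress : cluster_sub predT par lf suppress_par suppress_lf.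
Proof.
move=> w; have [->|wu] := eqVneq w u.
  case: child_c => _ _ cu; exists (Sub c cu) => a _.
  by rewrite anc_lf_u anc_suppress_par.
by exists (Sub w wu) => a _; rewrite anc_suppress_par.
Qed.

Lemma cluster_sub_unsuppress : cluster_sub predT suppress_par suppress_lf par lf.
Proof. by move=> w; exists (val w) => a _; rewrite anc_suppress_par. Qed.

Lemma card_suppress : #|{: {w : M | w != u}}| < #|M|.
Proof. by rewrite card_sig cardC1 ltn_predL; apply/card_gt0P; exists u. Qed.

Lemma suppress_unary_vertex :
  exists (M' : finType) (r' : M') (par' : M' -> M') (lf' : V -> M'),
    [/\ #|M'| < #|M|, leaf_labelled_tree r' par' lf',
        cluster_sub predT par lf par' lf' & cluster_sub predT par' lf' par lf].
Proof.
exists {w : M | w != u}, suppress_root, suppress_par, suppress_lf; split.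
- exact: card_suppress.
- exact: suppress_leaf_labelled_tree.
- exact: cluster_sub_suppress.
- exact: cluster_sub_unsuppress.
Qed.

End SuppressUnaryVertex.

Lemma leaf_labelled_tree_normalize (V M : finType) (r : M) par (lf : V -> M) :
  leaf_labelled_tree r par lf ->
  exists (N : finType) (r' : N) (par' : N -> N) (lf' : V -> N),
    [/\ phylo_tree r' par' lf', cluster_sub predT par lf par' lf'
      & cluster_sub predT par' lf' par lf].
Proof.
move Hm : #|M| => m; elim/ltn_ind: m M r par lf Hm => m IH M r par lf Hm tree.
have [/existsP [u /and3P [ur u_inner u_unary]] | /existsPn no_unary] :=
  boolP [exists v, [&& v != r, ~~ is_leaf r par v & nchildren r par v < 2]].
- have /cards1P [c children_u] : nchildren r par u == 1.
    by move: u_inner u_unary; rewrite /is_leaf; case: nchildren => [|[|]].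
  have [M' [r' [par' [lf' [ltM tree' sub sub']]]]] :=
    suppress_unary_vertex tree ur children_u.
  rewrite Hm in ltM.
  have [N [r'' [par'' [lf'' [phylo sub1 sub1']]]]] := IH _ ltM M' r' par' lf' erefl tree'.
  exists N, r'', par'', lf''.
  by split=> //; [exact: cluster_sub_trans sub sub1 | exact: cluster_sub_trans sub1' sub'].
- exists M, r, par, lf; split; [|exact: cluster_sub_refl..].
  case: tree => rtree lf_inj leafE; split=> // v vr v_inner.
  by move: (no_unary v); rewrite (introN eqP vr) v_inner -leqNgt.
Qed.

Section ReattachLeaf.
Variables (V N : finType) (r : N) (par : N -> N) (lf : V -> N) (x : V).
Hypothesis phylo : phylo_tree r par lf.

(* [None] is a new root above [r]; the leaf [lf x] is moved to hang directly below it. *)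
Definition reattach_par (W : option N) : option N :=
  if W is Some w then if (w == lf x) || (w == r) then None else Some (par w) else None.

Let rtree : rooted_tree r par. Proof. by case: phylo. Qed.
Let par_r : par r = r. Proof. by case: rtree. Qed.
Let leaf_lf a : is_leaf r par (lf a). Proof. by case: phylo => _ _ -> _; exists a. Qed.

Let lf_neq a : a != x -> lf a != lf x.
Proof. by case: phylo => _ lf_inj _ _; apply: contra_neq => /lf_inj. Qed.

Let par_neq_lf w : w != r -> par w != lf x.
Proof. by move/is_leafP: (leaf_lf x); apply. Qed.

Lemma reattach_par_Some w :
  w != lf x -> w != r -> reattach_par (Some w) = Some (par w).
Proof. by move=> wx wr; rewrite /= (negbTE wx) (negbTE wr). Qed.

Lemma anc_reattach_Some w y :
  w != lf x -> anc reattach_par (Some w) (Some y) <-> anc par w y.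
Proof.
move=> wx; split=> [[k]|[k <-]]; elim: k w wx => [|k IH] w wx.
- by move=> [<-]; exact: anc_refl.
- rewrite iterSr; have [->|wr] := eqVneq w r.
    by rewrite /= eqxx orbT iter_fix.
  rewrite reattach_par_Some // => /(IH _ (par_neq_lf wr)).
  exact: anc_trans (anc_par _ _).
- exact: anc_refl.
- rewrite iterSr; have [->|wr] := eqVneq w r.
    by rewrite par_r iter_fix //; exact: anc_refl.
  apply: anc_trans (IH _ (par_neq_lf wr)); exists 1; exact: reattach_par_Some.
Qed.

Lemma anc_reattach_None W : anc reattach_par W None.
Proof.
case: W => [w|]; last exact: anc_refl.
have [wx|wx] := eqVneq w (lf x); first by exists 1; rewrite /= wx eqxx.
apply: anc_trans (_ : anc _ _ (Some r)) _.
  by apply/anc_reattach_Some => //; exact: anc_root rtree _.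
by exists 1; rewrite /= eqxx orbT.
Qed.

Variable v : V.
Hypothesis vx : v != x.

Lemma sibling_lf : exists w, [/\ w != r, par w = par (lf x) & w != lf x].
Proof.
have lf_vx := lf_neq vx.
have xr : lf x != r := leaf_neq_root rtree (leaf_lf x) lf_vx.
have [pr|pr] := eqVneq (par (lf x)) r.
  have vr : lf v != r.
    by apply: leaf_neq_root rtree (leaf_lf v) (_ : lf x != _); rewrite eq_sym.
  have [w [pw vw wr]] := anc_child (anc_root rtree (lf v)) vr.
  exists w; split=> //; first by rewrite pw pr.
  by apply: contra_neq lf_vx => wx; apply: anc_leaf par_r (leaf_lf x) _; rewrite -wx.
have p_inner : ~~ is_leaf r par (par (lf x)).
  by apply/negP => /is_leafP /(_ _ xr); rewrite eqxx.
case: phylo => _ _ _ /(_ _ (elimN eqP pr) p_inner).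
rewrite /nchildren (cardsD1 (lf x)) inE /is_child xr eqxx /= add1n ltnS card_gt0.
case/set0Pn => w; rewrite !inE /is_child => /andP [wx /andP [wr /eqP pw]].
by exists w.
Qed.

Lemma is_leaf_reattach w : is_leaf None reattach_par (Some w) <-> is_leaf r par w.
Proof.
split=> /is_leafP leaf; apply/is_leafP.
- move=> y yr; have [->|yx] := eqVneq y (lf x); last first.
    by move: (leaf (Some y) isT); rewrite reattach_par_Some.
  have [w0 [w0r pw0 w0x]] := sibling_lf.
  by move: (leaf (Some w0) isT); rewrite reattach_par_Some // pw0.
- case=> [y|//] _; rewrite /=; case: ifP => // /norP [_ yr].
  exact: leaf.
Qed.

Lemma reattach_leaf_labelled_tree :
  leaf_labelled_tree None reattach_par (fun a => Some (lf a)).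
Proof.
case: phylo => _ lf_inj leafE _; split.
- by split=> // W; exact: anc_reattach_None.
- by move=> a b [/lf_inj].
- case=> [w|]; last first.
    by split=> [/is_leafP /(_ (Some r) isT)|[]//]; rewrite /= eqxx orbT.
  rewrite is_leaf_reattach leafE.
  by split=> -[a aw]; exists a; [rewrite aw | case: aw].
Qed.

Lemma cluster_sub_reattach :
  cluster_sub (predC1 x) par lf reattach_par (fun a => Some (lf a)).
Proof. by move=> w; exists (Some w) => a ax; rewrite anc_reattach_Some ?lf_neq. Qed.

Lemma cluster_sub_unreattach :
  cluster_sub (predC1 x) reattach_par (fun a => Some (lf a)) par lf.
Proof.
case=> [w|]; first by exists w => a ax; rewrite anc_reattach_Some ?lf_neq.
by exists r => a _; split=> _; [exact: anc_root rtree _ | exact: anc_reattach_None].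
Qed.

Lemma lca_le_reattach_hub b d :
  d != x -> lca_le reattach_par (Some (lf x)) (Some (lf b)) (Some (lf d)).
Proof.
move=> dx W [[|k] <-] dW.
  move/(anc_reattach_Some _ (lf_neq dx))/(anc_leaf par_r (leaf_lf x))/eqP: dW.
  by rewrite (negbTE (lf_neq dx)).
by rewrite iterSr /= eqxx iter_fix //; exact: anc_reattach_None.
Qed.

Lemma reattach_phylo_tree :
  exists (M : finType) (r' : M) (par' : M -> M) (lf' : V -> M),
    [/\ phylo_tree r' par' lf', cluster_sub (predC1 x) par lf par' lf',
        cluster_sub (predC1 x) par' lf' par lf &
        forall b d, d != x -> lca_le par' (lf' x) (lf' b) (lf' d)].
Proof.
have [M [r' [par' [lf' [phylo' sub sub']]]]] :=
  leaf_labelled_tree_normalize reattach_leaf_labelled_tree.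
exists M, r', par', lf'; split=> //.
- exact: cluster_sub_trans cluster_sub_reattach (cluster_sub_predT _ sub).
- exact: cluster_sub_trans (cluster_sub_predT _ sub') cluster_sub_unreattach.
- by move=> b d dx; apply: lca_le_cluster_sub sub' _ _ _ (lca_le_reattach_hub b dx).
Qed.

End ReattachLeaf.

Lemma reciprocal_best_matchC (V S N : finType) (par : N -> N) (lf : V -> N)
    (sigma : V -> S) x y :
  reciprocal_best_match par lf sigma x y <-> reciprocal_best_match par lf sigma y x.
Proof. by split=> -[]. Qed.

Lemma adjC (V : finType) (E : {set {set V}}) a b : adj E a b = adj E b a.
Proof. by rewrite /adj setUC. Qed.

Lemma is_RBMG_hub (V S : finType) (H H' : {set {set V}}) (sigma : V -> S) (x : V) :
  (forall y, y != x -> sigma y != sigma x) -> is_RBMG H sigma ->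
  (forall a b, a != x -> b != x -> adj H' a b <-> adj H a b) ->
  (forall b, adj H' x b <-> b != x) ->
  is_RBMG H' sigma.
Proof.
move=> x_color [_ [N [r [par [lf [phylo rbmH]]]]]] adj_other adj_x.
have [/existsP [v vx] | /existsPn only_x] := boolP [exists v, v != x]; last first.
  have xE y : y = x by apply/eqP/negPn/only_x.
  split=> [a b|]; first by rewrite (xE a) (xE b) adj_x eqxx.
  exists N, r, par, lf; split=> // a b; rewrite (xE a) (xE b) adj_x eqxx.
  by split=> // -[[/(_ erefl)]].
have [M [r' [par' [lf' [phylo' sub sub' hub]]]]] := reattach_phylo_tree phylo vx.
have [tree tree'] : rooted_tree r par /\ rooted_tree r' par' by case: phylo; case: phylo'.
have color_closed y z : sigma y = sigma z -> z != x -> y != x.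
  by move=> yz zx; apply: contra_neq (x_color _ zx) => yx; rewrite -yz yx.
have rbm_x b : reciprocal_best_match par' lf' sigma x b <-> b != x.
  split=> [[[neq _] _]|bx]; first by apply: contra_not_neq neq => ->.
  split; apply/(best_matchE _ _ _ _ tree'); split.
  - by apply/eqP; rewrite eq_sym x_color.
  - by move=> y yc; apply/hub/(color_closed _ _ yc).
  - exact/eqP/x_color.
  - by move=> y yc; have [-> //|/x_color] := eqVneq y x; rewrite yc eqxx.
have adj_rbm a b : adj H' a b <-> reciprocal_best_match par' lf' sigma a b.
  have [->|ax] := eqVneq a x; first by rewrite adj_x rbm_x.
  have [->|bx] := eqVneq b x; first by rewrite adjC reciprocal_best_matchC adj_x rbm_x.
  rewrite adj_other // rbmH /reciprocal_best_match.
  by rewrite !(best_match_cluster_sub tree tree' sub sub' color_closed).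
split=> [a b /adj_rbm [[]] //|]; by exists M, r', par', lf'.
Qed.

Section PairsAvoidingHub.
Variables (V S : finType) (E : {set {set V}}) (sigma : V -> S) (n : nat) (x : V).

Definition pairs_avoiding (F : {set {set V}}) : {set {set V}} := [set e in F | x \notin e].

Lemma pairs_avoiding_pair (F : {set {set V}}) a b :
  a != x -> b != x -> ([set a; b] \in pairs_avoiding F) = ([set a; b] \in F).
Proof. by move=> ax bx; rewrite inE !inE !(eq_sym x) (negbTE ax) (negbTE bx) andbT. Qed.

Lemma pairs_avoiding_hub (F : {set {set V}}) b : [set x; b] \notin pairs_avoiding F.
Proof. by rewrite inE set21 andbF. Qed.

Lemma pairs_avoiding_sub (F : {set {set V}}) : pairs_avoiding F \subset F.
Proof. by apply/subsetP => e; rewrite inE => /andP []. Qed.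

Lemma card_pairs_avoiding (F : {set {set V}}) b :
  [set x; b] \in F -> #|pairs_avoiding F| < #|F|.
Proof.
move=> xbF; apply: proper_card; apply/properP; split; first exact: pairs_avoiding_sub.
by exists [set x; b]; last exact: pairs_avoiding_hub.
Qed.

Hypotheses (simpleE : simple_edges E) (hub : hub_vertex E x).
Hypothesis proper : proper_coloring E sigma.

Lemma hub_pairE b : ([set x; b] \in E) = (b != x).
Proof.
apply/idP/idP => [/simpleE|bx]; last by apply: hub; exact/eqP.
by rewrite cards2 eq_sym; case: (b != x).
Qed.

Lemma hub_color_unique y : y != x -> sigma y != sigma x.
Proof. by move=> yx; apply/eqP/nesym/proper/hub/eqP. Qed.

Lemma deletion_set_avoiding (F : {set {set V}}) :
  deletion_set E sigma n F -> deletion_set E sigma n (pairs_avoiding F).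
Proof.
move=> [FE [rbmg ncol]]; split; first exact: subset_trans (pairs_avoiding_sub F) FE.
split=> //; apply: (is_RBMG_hub hub_color_unique rbmg) => [a b ax bx|b].
  by rewrite /adj !in_setD pairs_avoiding_pair.
by rewrite /adj in_setD (negbTE (pairs_avoiding_hub F b)) hub_pairE.
Qed.

Lemma edit_set_avoiding (F : {set {set V}}) :
  edit_set E sigma n F -> edit_set E sigma n (pairs_avoiding F).
Proof.
move=> [F2 [rbmg ncol]]; split; first by move=> e; rewrite inE => /andP [/F2].
split=> //; apply: (is_RBMG_hub hub_color_unique rbmg) => [a b ax bx|b].
  by rewrite /adj !in_setU !in_setD !pairs_avoiding_pair.
by rewrite /adj in_setU !in_setD (negbTE (pairs_avoiding_hub F b)) andbF orbF hub_pairE.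
Qed.

End PairsAvoidingHub.

Unset Implicit Arguments. Set Strict Implicit.

Theorem mainTheorem5 (V S : finType) (E : {set {set V}}) (sigma : V -> S) (n : nat)
  (x : V) :
  simple_edges E ->
  properly_n_colored E sigma n ->
  hub_vertex E x ->
  (forall F, optimal_deletion_set E sigma n F -> forall v, [set x; v] \notin F) /\
  (forall F, optimal_edit_set E sigma n F -> forall v, [set x; v] \notin F).
Proof.
move=> simpleE [proper _] hub; split=> F [HF Fmin] v; apply/negP => xvF.
- have := Fmin _ (deletion_set_avoiding simpleE hub proper HF).
  by rewrite leqNgt (card_pairs_avoiding xvF).
- have := Fmin _ (edit_set_avoiding simpleE hub proper HF).
  by rewrite leqNgt (card_pairs_avoiding xvF).
Qed.
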